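(* In base $B=3$, for every $\eta\ge 2$, $$\gamma_3(\eta+1)=2\cdot 3^{\frac{\gamma_3(\eta)-1}{4}}-1,$$ where $\gamma_3(2)=13=(1,1,1)_3$ (so that $\gamma_3(3)=2\cdot3^3-1$).
   Context: Every integer $x>0$ is written uniquely in base $3$ as $x=\sum_{i} x_i 3^i$ with digits $x_i\in\{0,1,2\}$; $(x_{L-1},\dots,x_0)_3$ denotes $x$ by its digits. Define $\mathcal{H}_3(x)=\sum_{i} x_i^2$, $\mathcal{H}_3^0(x)=x$, $\mathcal{H}_3^n=\mathcal{H}_3\circ\mathcal{H}_3^{n-1}$. A positive integer $x$ is happy if $\mathcal{H}_3^n(x)=1$ for some $n\in\mathbb{N}$; its height is $\eta_3(x)=\min\{\alpha\in\mathbb{N}:\mathcal{H}_3^\alpha(x)=1\}$. For $n\in\mathbb{N}$, $\gamma_3(n)$ denotes the smallest happy number $x\ge1$ with $\eta_3(x)=n$. *)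

From mathcomp Require Import all_boot.
Set Implicit Arguments. Unset Strict Implicit. Unset Printing Implicit Defensive.

Definition digit3 (x i : nat) : nat := (x %/ 3 ^ i) %% 3.

(* H_3(x) = sum of squares of the base-3 digits of x.  Digits of index
   i >= x vanish since 3^i > x, so summing over i < x covers all digits. *)
Definition H3 (x : nat) : nat := \sum_(i < x) (digit3 x i) ^ 2.

Definition H3iter (n x : nat) : nat := iter n H3 x.

Definition happy3 (x : nat) : Prop := exists n, H3iter n x = 1.

Definition height3 (x alpha : nat) : Prop :=
  H3iter alpha x = 1 /\ forall m, m < alpha -> H3iter m x <> 1.

Definition is_gamma3 (n g : nat) : Prop :=
  [/\ 1 <= g, happy3 g, height3 g n &
      forall y, 1 <= y -> y < g -> happy3 y -> ~ height3 y n].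

From mathcomp Require Import all_boot.
From mathcomp Require Import zify.

Set Implicit Arguments.
Unset Strict Implicit.
Unset Printing Implicit Defensive.

(* Digits: H3 y = (y mod 3)^2 + H3 (y / 3), so H3 can be analysed by peeling
   off the lowest base-3 digit.  Since a digit squared is at most 4, every
   y < 2 * 3^k has H3 y <= 4k + 1, with equality at y = 2 * 3^k - 1 = (1,2,..,2)_3,
   and every smaller y has H3 y <= 4k.

   Heights: for x <> 1, x has height n+1 iff H3 x has height n.  Hence if
   g = gamma_3(eta) = 4k + 1, the number x = 2 * 3^k - 1 has height eta + 1,
   and any y < x of height eta + 1 would give H3 y <= 4k < g of height eta,
   contradicting the minimality of g.  Since 2 * 3^k - 1 is again 1 mod 4,
   induction from gamma_3(2) = 13 (checked by computation) shows that every
   gamma_3(eta) is 1 mod 4; uniqueness of gamma then yields the theorem. *)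

(* Sum of the squares of the n lowest base-3 digits; a computable version
   of H3 that agrees with it on numbers with at most n digits. *)
Fixpoint sqdigits (n y : nat) : nat :=
  if n is n'.+1 then (y %% 3) ^ 2 + sqdigits n' (y %/ 3) else 0.

Lemma H3_sum n y : y < 3 ^ n -> H3 y = \sum_(i < n) digit3 y i ^ 2.
Proof.
have vanish m j : y < 3 ^ m -> m <= j -> digit3 y j = 0.
  by move=> ym mj; rewrite /digit3 divn_small // (leq_trans ym) ?leq_pexp2l.
have widen m p : y < 3 ^ m -> m <= p ->
    \sum_(i < p) digit3 y i ^ 2 = \sum_(i < m) digit3 y i ^ 2.
  move=> ym mp; rewrite -(subnKC mp) big_split_ord /= [X in _ + X]big1 ?addn0 // => i _.
  by rewrite (vanish m) ?leq_addr.
move=> yn; have y_digits : y < 3 ^ y by apply: ltn_expl.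
rewrite /H3; case: (leqP n y) => [ny | /ltnW yn'].
  exact: widen.
by rewrite (widen y n).
Qed.

Lemma H3_0 : H3 0 = 0.
Proof. by rewrite /H3 big_ord0. Qed.

Lemma H3_rec y : H3 y = (y %% 3) ^ 2 + H3 (y %/ 3).
Proof.
have yS : y < 3 ^ y.+1 by rewrite ltnW // ltn_expl.
have qS : y %/ 3 < 3 ^ y by rewrite (leq_ltn_trans (leq_div y 3)) // ltn_expl.
rewrite (H3_sum yS) (H3_sum qS) big_ord_recl /digit3 expn0 divn1.
by congr (_ + _); apply: eq_bigr => i _; rewrite -divnMA -expnS.
Qed.

Lemma H3_sqdigits n y : y < 3 ^ n -> H3 y = sqdigits n y.
Proof.
elim: n y => [|n IH] y /=.
  by rewrite expn0 ltnS leqn0 => /eqP ->; rewrite H3_0.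
by move=> yn; rewrite H3_rec IH // ltn_divLR // -expnSr.
Qed.

Lemma sq_digit r : r < 3 -> r ^ 2 <= 4.
Proof. by case: r => [|[|[|]]]. Qed.

Lemma H3_le y k : y < 2 * 3 ^ k -> H3 y <= 4 * k + 1.
Proof.
elim: k y => [|k IH] y.
  by rewrite expn0; case: y => [|[|]] // _; rewrite (@H3_sqdigits 1).
move=> yk; rewrite H3_rec.
have qk : y %/ 3 < 2 * 3 ^ k by rewrite ltn_divLR // -mulnA -expnSr.
have := IH _ qk; have := sq_digit (ltn_pmod y (isT : 0 < 3)); lia.
Qed.

Lemma H3_extremal k : H3 (2 * 3 ^ k - 1) = 4 * k + 1.
Proof.
elim: k => [|k IH]; first by rewrite (@H3_sqdigits 1).
have split3 : 2 * 3 ^ k.+1 - 1 = (2 * 3 ^ k - 1) * 3 + 2.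
  have t_pos : 0 < 3 ^ k by rewrite expn_gt0.
  by rewrite expnS; lia.
rewrite H3_rec split3 modnMDl divnMDl // (divn_small (isT : 2 < 3)) addn0 IH.
lia.
Qed.

Lemma H3_lt_extremal y k : y < 2 * 3 ^ k - 1 -> H3 y <= 4 * k.
Proof.
elim: k y => [|k IH] y; first by rewrite expn0; case: y => // _; rewrite H3_0.
rewrite expnS H3_rec => yk.
have r3 : y %% 3 < 3 := ltn_pmod y (isT : 0 < 3).
have ey := divn_eq y 3; set q := y %/ 3 in ey *; set r := y %% 3 in ey r3 *.
have [qk | qk] := ltnP q (2 * 3 ^ k - 1).
  by have := IH _ qk; have := sq_digit r3; lia.
(* q is the extremal number with k digits, so the last digit r is at most 1 *)
have r1 : r <= 1 by lia.
have q_le : q < 2 * 3 ^ k by lia.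
have := H3_le q_le; have : r ^ 2 <= 1 by move: r1; rewrite leq_eqVlt ltnS leqn0 => /orP [] /eqP ->.
lia.
Qed.

Lemma H3iter_0 n : H3iter n 0 = 0.
Proof. by elim: n => //= n IH; rewrite /H3iter /= -/(H3iter n 0) IH H3_0. Qed.

Lemma H3iterS n x : H3iter n.+1 x = H3iter n (H3 x).
Proof. by rewrite /H3iter iterSr. Qed.

Lemma height3_H3 x n : height3 x n.+1 -> height3 (H3 x) n.
Proof.
case=> hx hmin; split; first by rewrite -H3iterS.
by move=> m mn; rewrite -H3iterS; apply: hmin.
Qed.

Lemma height3_H3_inv x n : x != 1 -> height3 (H3 x) n -> height3 x n.+1.
Proof.
move=> x1 [hx hmin]; split; first by rewrite H3iterS.
by case=> [_|m mn]; [apply/eqP | rewrite H3iterS; apply: hmin].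
Qed.

Lemma height3_pos z n : height3 z n -> 1 <= z /\ happy3 z.
Proof.
case=> hz _; split; last by exists n.
by move: hz; case: (posnP z) => // ->; rewrite H3iter_0.
Qed.

Lemma gamma3_min n g z : is_gamma3 n g -> height3 z n -> g <= z.
Proof.
case=> _ _ _ gmin hz; have [z1 hap] := height3_pos hz.
by rewrite leqNgt; apply/negP => zg; apply: (gmin z).
Qed.

Lemma gamma3_uniq n g1 g2 : is_gamma3 n g1 -> is_gamma3 n g2 -> g1 = g2.
Proof.
move=> h1 h2; case: (h1) => _ _ hg1 _; case: (h2) => _ _ hg2 _.
by apply/eqP; rewrite eqn_leq (gamma3_min h1 hg2) (gamma3_min h2 hg1).
Qed.

Lemma gamma3_step eta g : 1 <= eta -> is_gamma3 eta g -> 4 %| g - 1 ->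
  is_gamma3 eta.+1 (2 * 3 ^ ((g - 1) %/ 4) - 1).
Proof.
move=> eta1 hg g_mod4; set k := (g - 1) %/ 4.
have gk : g = 4 * k + 1 by have := divnK g_mod4; case: hg => g1 _ _ _; lia.
rewrite {}gk {g_mod4} in hg *; case: (hg) => _ _ [hg1 hgmin] _.
have k1 : 1 <= k.
  by case: k hg hg1 hgmin => // _ _ /(_ 0 eta1); rewrite /H3iter.
have t3 : 3 <= 3 ^ k by rewrite -{1}(expn1 3) leq_pexp2l.
set x := 2 * 3 ^ k - 1.
have hx : height3 x eta.+1.
  by apply: height3_H3_inv; [rewrite /x; lia | rewrite H3_extremal; case: hg].
have [x1 xhap] := height3_pos hx.
split=> // y _ yx _ /height3_H3 hy.
have := gamma3_min hg hy; have := H3_lt_extremal yx; lia.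
Qed.

Lemma extremal_mod4 k : 4 %| 2 * 3 ^ k - 1 - 1.
Proof.
have odd3k : odd (3 ^ k) by rewrite oddX orbT.
have := odd_double_half (3 ^ k); rewrite odd3k.
move: (3 ^ k)./2 => j; rewrite -muln2 => <-.
by apply/dvdnP; exists j; lia.
Qed.

Lemma gamma3_2 : is_gamma3 2 13.
Proof.
have e13 : H3 13 = 3 by rewrite (@H3_sqdigits 3).
have e3 : H3 3 = 1 by rewrite (@H3_sqdigits 3).
have h13 : height3 13 2.
  by split; [rewrite /H3iter /= e13 e3 | case=> [|[|]] // _; rewrite /H3iter /= e13].
split=> //; first by exists 2; case: h13.
move=> y y1 y13 _ [hy2 hymin].
have ey : H3 y = sqdigits 3 y by apply: H3_sqdigits; apply: ltn_trans y13 _.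
have small : all (fun y => (sqdigits 3 y < 27) &&
    [|| y == 1, sqdigits 3 y == 1 | sqdigits 3 (sqdigits 3 y) != 1])
    (iota 1 12) by [].
move: small => /allP /(_ y); rewrite mem_iota y1 => /(_ y13) /andP [sq_small].
rewrite -(@H3_sqdigits 3 _ sq_small) -ey -[H3 (H3 y)]/(H3iter 2 y) hy2.
by case/or3P=> /eqP // h; [apply: (hymin 0) | apply: (hymin 1)].
Qed.

Lemma gamma3_exists eta : 2 <= eta -> exists2 g, is_gamma3 eta g & 4 %| g - 1.
Proof.
elim: eta => [|e IH] // e2; have [e1 | e1] := leqP e 1.
  have -> : e = 1 by lia.
  by exists 13; first exact: gamma3_2.
have [g hg g_mod4] := IH e1.
exists (2 * 3 ^ ((g - 1) %/ 4) - 1); last exact: extremal_mod4.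
by apply: gamma3_step => //; lia.
Qed.

Theorem lemma5p1 :
  is_gamma3 2 13 /\
  forall (eta g : nat), 2 <= eta -> is_gamma3 eta g ->
    4 %| g - 1 /\ is_gamma3 eta.+1 (2 * 3 ^ ((g - 1) %/ 4) - 1).
Proof.
split=> [|eta g eta2 hg]; first exact: gamma3_2.
have [g' hg' g'_mod4] := gamma3_exists eta2.
have g_mod4 : 4 %| g - 1 by rewrite (gamma3_uniq hg hg').
split=> //.
by apply: gamma3_step => //; lia.
Qed.
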